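(* Let $X$ be an FK-space containing $\phi$ such that every weakly convergent sequence in $X$ converges in the FK-topology of $X$. Then, computed in $X$, $D_p^qS=D_p^qW=D_p^qF=D_p^qF^+$.
   Context: An FK-space is a vector subspace of the space $w$ of all complex sequences with a complete metrizable locally convex topology in which coordinate functionals are continuous; $X'$ is its continuous dual. $\delta^j$ has $1$ in position $j$, $0$ elsewhere; $\phi=\operatorname{span}\{\delta^j\}$. $p(n)<q(n)$ are nonnegative integer sequences with $q(n)\to\infty$. For $x\in w$, $x^{(k)}=\sum_{j=1}^kx_j\delta^j$ and $T_n(x)=\frac{1}{q(n)-p(n)}\sum_{k=p(n)+1}^{q(n)}x^{(k)}$. $D_p^qS=\{x\in X: T_n(x)\to x\text{ in }X\}$; $D_p^qW=\{x\in X: f(T_n(x))\to f(x)\ \forall f\in X'\}$; $D_p^qF^+=\{x\in w:\lim_n f(T_n(x))\text{ exists }\forall f\in X'\}$ (i.e. $(T_n(x))$ is weakly Cauchy in $X$); $D_p^qF=D_p^qF^+\cap X$. *)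

From HB Require Import structures.
From mathcomp Require Import all_boot all_algebra.
From mathcomp Require Import complex.
From mathcomp Require Import all_classical all_reals all_analysis.
Import GRing.Theory Num.Theory numFieldTopology.Exports numFieldNormedType.Exports.

Set Implicit Arguments.
Unset Strict Implicit.
Unset Printing Implicit Defensive.

Local Open Scope classical_set_scope.
Local Open Scope ring_scope.

Definition cplx (R : realType) : numFieldType := R[i].

(** Sequences in w are maps nat -> C; coordinates are indexed from 0
    (position j of the paper is index j-1 here). *)

Definition delta (R : realType) (j : nat) : nat -> cplx R :=
  fun k => if k == j then 1 else 0.

(** The k-th section x^(k) = sum_{j=1}^k x_j delta^j, i.e. the first k
    coordinates of x (indices 0..k-1), zero elsewhere. *)
Definition sect (R : realType) (k : nat) (x : nat -> cplx R) : nat -> cplx R :=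
  fun j => if (j < k)%N then x j else 0.

(** T_n(x) = 1/(q(n)-p(n)) * sum_{k=p(n)+1}^{q(n)} x^(k) *)
Definition Tn (R : realType) (p q : nat -> nat) (n : nat) (x : nat -> cplx R)
  : nat -> cplx R :=
  fun j => ((q n - p n)%N%:R)^-1 * \sum_(p n <= k < q n) sect k.+1 x j.

Section FK.
Variables (R : realType) (E : tvsType (cplx R)).

Definition in_dual (f : E -> cplx R) : Prop :=
  (forall (a : cplx R) (x y : E), f (a *: x + y) = a * f x + f y) /\ continuous f.

Definition metrizable : Prop :=
  exists d : E -> E -> R,
    [/\ forall x y, 0 <= d x y,
        forall x y, d x y = 0 <-> x = y,
        forall x y, d x y = d y x,
        forall x y z, d x z <= d x y + d y z &
        forall (x : E) (A : set E),
          nbhs x A <-> exists2 eps : R, 0 < eps & [set y | d x y < eps] `<=` A].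

(** Completeness of the (metrizable) topological vector space E w.r.t. its
    canonical (translation-invariant) uniformity: every Cauchy sequence converges. *)
Definition tvs_cauchy_seq (u : nat -> E) : Prop :=
  forall V : set E, nbhs (0 : E) V ->
    exists N : nat, forall m n : nat, (N <= m)%N -> (N <= n)%N -> V (u m - u n).

Definition tvs_complete : Prop :=
  forall u : nat -> E, tvs_cauchy_seq u -> exists l : E, u @ \oo --> l.

(** An FK-space: E is a complete metrizable locally convex space (tvsType is
    locally convex), identified with a vector subspace X = range iota of w via
    the injective linear map iota, such that all coordinate functionals are
    continuous. *)
Definition FK_space (iota : E -> nat -> cplx R) : Prop :=
  [/\ forall (a : cplx R) (x y : E) (j : nat),
        iota (a *: x + y) j = a * iota x j + iota y j,
      injective iota,
      metrizable,
      tvs_complete &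
      forall j : nat, continuous (fun x : E => iota x j)].

Definition contains_phi (iota : E -> nat -> cplx R) : Prop :=
  forall j : nat, exists e : E, iota e = delta R j.

Definition weak_cvg (u : nat -> E) (l : E) : Prop :=
  forall f, in_dual f -> (fun n => f (u n)) @ \oo --> f l.

Definition weak_cauchy (u : nat -> E) : Prop :=
  forall f, in_dual f -> cvgn (fun n => f (u n)).

Variables (iota : E -> nat -> cplx R) (p q : nat -> nat).

(** D_p^q S: x in X with T_n(x) -> x in X.  (T_n(x) lies in phi, a subset of X;
    t n denotes the element of X representing T_n(x).) *)
Definition DS : set (nat -> cplx R) :=
  [set x | exists e : E, iota e = x /\
     exists t : nat -> E, (forall n, iota (t n) = Tn p q n x) /\ t @ \oo --> e].

Definition DW : set (nat -> cplx R) :=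
  [set x | exists e : E, iota e = x /\
     exists t : nat -> E, (forall n, iota (t n) = Tn p q n x) /\ weak_cvg t e].

Definition DFplus : set (nat -> cplx R) :=
  [set x | exists t : nat -> E, (forall n, iota (t n) = Tn p q n x) /\ weak_cauchy t].

Definition DF : set (nat -> cplx R) := DFplus `&` range iota.

End FK.

From mathcomp Require Import all_boot all_algebra.
From mathcomp Require Import complex.
From mathcomp Require Import all_classical all_reals all_analysis.
From mathcomp Require Import zify.
Import order.Order.TTheory GRing.Theory Num.Theory numFieldTopology.Exports numFieldNormedType.Exports.

Set Implicit Arguments.
Unset Strict Implicit.
Unset Printing Implicit Defensive.

Local Open Scope classical_set_scope.
Local Open Scope ring_scope.

(* Coordinatewise, [T_n x] is [x] damped by the proportion of the sections
   [x^(k)], [p(n) < k <= q(n)], that miss coordinate [j]; this proportion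
   tends to [0] as [q(n) -> oo], so [T_n x -> x] coordinatewise.  If [(T_n x)]
   is weakly Cauchy and yet not Cauchy, differences [T_(m_k) x - T_(n_k) x]
   with [m_k, n_k -> oo] stay out of a fixed neighbourhood of [0] while
   tending weakly to [0]; by hypothesis they converge, and since the coordinate functionals separate points of [X]
   the limit is the weak limit [0], a contradiction.  So [(T_n x)] is Cauchy,
   converges by completeness, and its limit is [x] coordinatewise.  Hence
   [D^+F] lies in [DS], closing the obvious chain [DS <= DW <= DF <= D^+F]. *)

Lemma sum_ltn_index_le (j P Q : nat) :
  (\sum_(P <= k < Q) (k < j)%N <= minn Q j - P)%N.
Proof.
elim: Q => [|Q IH]; first by rewrite big_geq.
case: (leqP P Q) => PQ; last by rewrite big_geq.
by rewrite big_nat_recr //=; case: (ltnP Q j) => Qj; lia.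
Qed.

Lemma cplx_invnS_lt (R : realType) (eps : cplx R) :
  0 < eps -> exists N : nat, (N.+1%:R : cplx R)^-1 < eps.
Proof.
case: eps => a b; rewrite ltcE /= => /andP[/eqP -> a_gt0].
set N := Num.bound a^-1; exists N.
have -> : (N.+1%:R : cplx R)^-1 = real_complex R (N.+1%:R^-1).
  by rewrite fmorphV /= rmorph_nat.
rewrite ltcE /= eqxx /= -[X in _ < X]invrK ltf_pV2 ?posrE ?invr_gt0 //.
apply: lt_trans (archi_boundP _) _; first by rewrite invr_ge0 ltW.
by rewrite ltr_nat.
Qed.

Lemma cvgny_ge_id (h : nat -> nat) : (forall k, (k <= h k)%N) -> h @ \oo --> \oo.
Proof. by move=> hk; apply/cvgnyPge => A; exists A => // k /= /leq_trans; apply. Qed.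

Section CoordinatewiseConvergence.
Variables (R : realType) (p q : nat -> nat).
Hypothesis p_lt_q : forall n, (p n < q n)%N.
Hypothesis q_cvgy : q @ \oo --> \oo.

Let missed (j n : nat) : nat := \sum_(p n <= k < q n) (k < j)%N.

Lemma TnE (x : nat -> cplx R) j n :
  Tn p q n x j = x j - ((missed j n)%:R / (q n - p n)%:R) * x j.
Proof.
have qp_neq0 : ((q n - p n)%N%:R : cplx R) != 0.
  by rewrite pnatr_eq0 subn_eq0 -ltnNge.
rewrite /Tn (eq_bigr (fun k => x j - (k < j)%N%:R * x j)); last first.
  by move=> k _; rewrite /sect ltnS; case: leqP; rewrite ?mul0r ?subr0 ?mul1r ?subrr.
rewrite sumrB sumr_const_nat -mulr_suml -natr_sum -[x j *+ _]mulr_natl.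
by rewrite mulrBr mulrA mulVf // mul1r mulrA [_^-1 * _]mulrC.
Qed.

Lemma missed_ratio_cvg0 j :
  (fun n => (missed j n)%:R / (q n - p n)%:R : cplx R) @ \oo --> 0.
Proof.
apply/cvgr0Pnorm_lt => eps eps_gt0.
have [N invN_lt] := cplx_invnS_lt eps_gt0.
have [M _ qM] := (cvgnyPge q).1 q_cvgy (j * N.+1)%N.
exists M => // n /qM q_large /=.
rewrite ger0_norm ?divr_ge0 ?ler0n //; apply: le_lt_trans invN_lt.
rewrite ler_pdivrMr ?ltr0n ?subn_gt0 // ler_pdivlMl ?ltr0n // -natrM ler_nat.
(* [missed j n <= j - p n], and it vanishes unless [p n < j]. *)
have := sum_ltn_index_le j (p n) (q n); have := p_lt_q n.
rewrite -/(missed j n); move: (missed j n) => c.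
nia.
Qed.

Lemma Tn_coord_cvg (x : nat -> cplx R) j : (fun n => Tn p q n x j) @ \oo --> x j.
Proof.
rewrite (funext (TnE x j)).
have := cvgB (cvg_cst (x j)) (cvgMr_tmp (b := x j) (missed_ratio_cvg0 j)).
by rewrite mul0r subr0; apply.
Qed.

End CoordinatewiseConvergence.

Lemma in_dualB (R : realType) (E : tvsType (cplx R)) (f : E -> cplx R) :
  in_dual f -> forall x y, f (x - y) = f x - f y.
Proof.
case=> f_lin _ x y.
by rewrite -scaleN1r addrC f_lin mulN1r addrC.
Qed.

Section WeakCauchyIsCauchy.
Variables (R : realType) (E : tvsType (cplx R)) (iota : E -> nat -> cplx R).
Hypothesis iota_linear : forall (a : cplx R) (x y : E) (j : nat),
  iota (a *: x + y) j = a * iota x j + iota y j.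
Hypothesis iota_inj : injective iota.
Hypothesis coord_cont : forall j : nat, continuous (fun x : E => iota x j).

Lemma coord_in_dual j : in_dual (fun x : E => iota x j).
Proof. by split; [move=> *; apply: iota_linear | apply: coord_cont]. Qed.

Lemma weak_cvg_cvg_eq (u : nat -> E) (l l' : E) :
  weak_cvg u l -> u @ \oo --> l' -> l' = l.
Proof.
move=> u_wl u_l'; apply: iota_inj; apply/funext => j.
have coord_l' := cvg_comp _ _ u_l' (@coord_cont j l').
exact: (cvg_unique _ coord_l' (u_wl _ (coord_in_dual j))).
Qed.

Lemma weak_cauchy_subB_weak_cvg0 (t : nat -> E) (m n : nat -> nat) :
  weak_cauchy t -> m @ \oo --> \oo -> n @ \oo --> \oo ->
  weak_cvg (fun k => t (m k) - t (n k)) 0.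
Proof.
move=> t_wc m_oo n_oo f f_dual.
have f0 : f 0 = 0 by rewrite -(subrr 0) in_dualB // subrr.
rewrite f0 (funext (fun k => in_dualB f_dual (t (m k)) (t (n k)))).
rewrite -(subrr (lim (f \o t @ \oo))).
have f_t := t_wc f f_dual.
exact: cvgB (cvg_comp _ _ m_oo f_t) (cvg_comp _ _ n_oo f_t).
Qed.

Hypothesis weak_cvg_is_cvg :
  forall (u : nat -> E) (l : E), weak_cvg u l -> exists l' : E, u @ \oo --> l'.

Lemma weak_cauchy_cauchy (t : nat -> E) : weak_cauchy t -> tvs_cauchy_seq t.
Proof.
move=> t_wc V V0; apply: contrapT => not_cauchy.
have bad N : exists mn : nat * nat,
    [/\ (N <= mn.1)%N, (N <= mn.2)%N & ~ V (t mn.1 - t mn.2)].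
  apply: contrapT => all_good; apply: not_cauchy; exists N => m n Nm Nn.
  by apply: contrapT => nV; apply: all_good; exists (m, n).
have [g g_bad] := choice bad.
pose w k := t (g k).1 - t (g k).2.
have w_w0 : weak_cvg w 0.
  by apply: weak_cauchy_subB_weak_cvg0 => //; apply: cvgny_ge_id => k; case: (g_bad k).
have [l w_l] := weak_cvg_is_cvg w_w0.
have l0 := weak_cvg_cvg_eq w_w0 w_l; subst l.
have [N _ w_V] := w_l V V0.
have := w_V N (leqnn N); rewrite /preimage /w /=.
by case: (g_bad N).
Qed.

End WeakCauchyIsCauchy.

Lemma DS_sub_DW (R : realType) (E : tvsType (cplx R))
    (iota : E -> nat -> cplx R) (p q : nat -> nat) :
  DS iota p q `<=` DW iota p q.
Proof.
move=> x [e [iota_e [t [iota_t t_e]]]]; exists e; split => //; exists t; split => //.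
by move=> f [_ f_cont]; apply: cvg_comp t_e (f_cont e).
Qed.

Lemma DW_sub_DF (R : realType) (E : tvsType (cplx R))
    (iota : E -> nat -> cplx R) (p q : nat -> nat) :
  DW iota p q `<=` DF iota p q.
Proof.
move=> x [e [iota_e [t [iota_t t_we]]]]; split; last by exists e.
exists t; split; first exact: iota_t.
by move=> f f_dual; apply: (cvgP _ (t_we f f_dual)).
Qed.

Lemma DFplus_sub_DS (R : realType) (E : tvsType (cplx R))
    (iota : E -> nat -> cplx R) (p q : nat -> nat) :
  FK_space iota ->
  (forall (u : nat -> E) (l : E), weak_cvg u l -> exists l' : E, u @ \oo --> l') ->
  (forall n, (p n < q n)%N) -> q @ \oo --> \oo ->
  DFplus iota p q `<=` DS iota p q.
Proof.
move=> [iota_lin iota_inj _ complete coord_cont] weak_cvg_is_cvg p_lt_q q_oo.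
move=> x [t [iota_t t_wc]].
have t_cauchy := weak_cauchy_cauchy iota_lin iota_inj coord_cont weak_cvg_is_cvg t_wc.
have [e t_e] := complete t t_cauchy.
exists e; split; last by exists t.
apply/funext => j.
have coord_t : (fun n => iota (t n) j) @ \oo --> x j.
  rewrite (_ : (fun n => _) = fun n => Tn p q n x j); first exact: Tn_coord_cvg.
  by apply/funext => n; rewrite iota_t.
exact: (cvg_unique _ (cvg_comp _ _ t_e (coord_cont j e)) coord_t).
Qed.

Theorem mainTheorem19 (R : realType) (E : tvsType (cplx R))
  (iota : E -> nat -> cplx R) (p q : nat -> nat) :
  FK_space iota ->
  contains_phi iota ->
  (forall (u : nat -> E) (l : E), weak_cvg u l -> exists l' : E, u @ \oo --> l') ->
  (forall n, (p n < q n)%N) ->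
  (forall M : nat, exists N : nat, forall n, (N <= n)%N -> (M <= q n)%N) ->
  DS iota p q = DW iota p q /\ DW iota p q = DF iota p q /\ DF iota p q = DFplus iota p q.
Proof.
move=> FK _ weak_cvg_is_cvg p_lt_q q_large.
have q_oo : q @ \oo --> \oo.
  by apply/cvgnyPge => M; have [N qN] := q_large M; exists N.
have S_W := @DS_sub_DW R E iota p q.
have W_F := @DW_sub_DF R E iota p q.
have F_Fplus : DF iota p q `<=` DFplus iota p q by apply: subIsetl.
have Fplus_S := DFplus_sub_DS FK weak_cvg_is_cvg p_lt_q q_oo.
split; [|split]; apply/seteqP; split => // x.
- by move/W_F/F_Fplus/Fplus_S.
- by move/F_Fplus/Fplus_S/S_W.
- by move/Fplus_S/S_W/W_F.
Qed.
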